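(* Let $p\ge3$ be a prime and let $d\ge2$ be an integer. There exists $\Theta(d,p)$ such that whenever $T:[n_1]\times\dots\times[n_d]\to\mathbb{F}_p$ is an order-$d$ tensor with $\mathrm{tr}\,T\ge\Theta(d,p)$ and $S_1,\dots,S_d$ are subsets of $\mathbb{F}_p$ each containing at least two elements, the $d$-linear form $m$ associated with $T$ satisfies $m(S_1^{n_1}\times\dots\times S_d^{n_d})=\mathbb{F}_p$.
   Context: The $d$-linear form associated with $T$ is $m:\mathbb{F}_p^{n_1}\times\dots\times\mathbb{F}_p^{n_d}\to\mathbb{F}_p$, $m(x^1,\dots,x^d)=\sum_{(i_1,\dots,i_d)}T(i_1,\dots,i_d)x^1_{i_1}\cdots x^d_{i_d}$. The tensor rank $\mathrm{tr}\,T$ is the least $k\ge0$ such that there exist functions $a_{i,\alpha}:[n_\alpha]\to\mathbb{F}_p$ ($i\in[k],\alpha\in[d]$) with $T(x_1,\dots,x_d)=\sum_{i=1}^ka_{i,1}(x_1)\cdots a_{i,d}(x_d)$ for all $(x_1,\dots,x_d)$. *)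

From HB Require Import structures.
From mathcomp Require Import all_boot all_order all_algebra.
Set Implicit Arguments. Unset Strict Implicit. Unset Printing Implicit Defensive.
Import GRing.Theory.
Local Open Scope ring_scope.

(* Multi-indices (i_1,...,i_d) in [n_1] x ... x [n_d], with [n] = 'I_n (0-based). *)
Definition multi_index (d : nat) (n : 'I_d -> nat) : finType :=
  {dffun forall a : 'I_d, 'I_(n a)}.

Definition tensor (F : Type) (d : nat) (n : 'I_d -> nat) := multi_index n -> F.

Definition mlform (F : comNzRingType) (d : nat) (n : 'I_d -> nat)
  (T : tensor F n) (x : forall a : 'I_d, 'I_(n a) -> F) : F :=
  \sum_(i : multi_index n) T i * \prod_(a < d) x a (i a).

Definition rank_decomp (F : comNzRingType) (d : nat) (n : 'I_d -> nat)
  (T : tensor F n) (k : nat) : Prop :=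
  exists f : 'I_k -> forall a : 'I_d, 'I_(n a) -> F,
    forall i : multi_index n, T i = \sum_(j < k) \prod_(a < d) f j a (i a).

(* "tr T >= r": the least k admitting such a decomposition is at least r,
   i.e. every decomposition uses at least r terms. *)
Definition tensor_rank_ge (F : comNzRingType) (d : nat) (n : 'I_d -> nat)
  (T : tensor F n) (r : nat) : Prop :=
  forall k, rank_decomp T k -> (r <= k)%N.

From HB Require Import structures.
From mathcomp Require Import all_boot all_order all_algebra zify ring.
Set Implicit Arguments. Unset Strict Implicit. Unset Printing Implicit Defensive.
Import GRing.Theory.
Local Open Scope ring_scope.

(* Pick u a <> v a in S a and only consider points x with x a t \in {u a, v a}.
   A tensor of rank at least K^d has at least K^d nonzero entries, so for some
   coordinate a0 at least K slices T(.., i, ..) (i in position a0) are nonzero.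
   Fixing the remaining coordinates one block at a time, each nonzero slice
   becomes an affine function of the new block of choices with a nonzero
   coefficient, hence stays nonzero for at least half of the choices; by
   averaging, some choice keeps half of the nonzero slices.  With
   K = (p - 1) 2^(d-1) this leaves p - 1 nonzero values c_i such that
   m(x) = \sum_i x a0 i * c_i, and the subset sums of p - 1 nonzero elements
   of F_p exhaust F_p, so the last block reaches every value. *)

Lemma card_le_double_nonzero (Z : finType) (V : zmodType) (f : Z -> Z) (g : Z -> V) :
  involutive f -> (forall z, g z = 0 -> g (f z) != 0) ->
  (#|Z| <= 2 * #|[set z | g z != 0%R]|)%N.
Proof.
move=> fK gf; set N := [set z | g z != 0].
have zeros_to_N : f @: (~: N) \subset N.
  by apply/subsetP=> w /imsetP[z]; rewrite !inE negbK => /eqP/gf gfz ->.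
have := subset_leq_card zeros_to_N; rewrite card_imset; last exact: can_inj fK.
by have := cardsC N; rewrite cardT -cardE; lia.
Qed.

Lemma exists_large_member (I Z : finType) (A : {set I}) (G : Z -> {set I}) c :
  (0 < #|Z|)%N -> (forall i, i \in A -> #|Z| <= c * #|[set z | i \in G z]|)%N ->
  exists z, (#|A| <= c * #|G z|)%N.
Proof.
move=> Z0 hA; have [z0 _] := card_gt0P Z0; pose h z := #|A :&: G z|.
exists [arg max_(z > z0) h z]; case: arg_maxnP => // z _ zmax.
have double_count : (\sum_(i in A) #|[set z | i \in G z]| = \sum_z h z)%N.
  rewrite /h; under eq_bigr do rewrite -sum1_card.
  under [in RHS]eq_bigr do rewrite -sum1_card.
  rewrite (exchange_big_dep xpredT) //=; apply: eq_bigr => w _.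
  by apply: eq_bigl => i; rewrite !inE andbC.
have : (#|Z| * #|A| <= #|Z| * (c * h z))%N.
  rewrite mulnC -sum_nat_const (leq_trans (leq_sum _ hA)) //.
  rewrite -big_distrr /= double_count mulnCA -sum_nat_const leq_mul2l.
  by apply/orP; right; apply: leq_sum => w _; apply: zmax.
rewrite leq_pmul2l // => /leq_trans; apply.
by rewrite leq_mul2l subset_leq_card ?orbT ?subsetIr.
Qed.

Lemma card_le_double_affine_nonzero (I : finType) (V : zmodType) (al : V) (be : I -> V) j :
  be j != 0 ->
  (#|{ffun I -> bool}| <= 2 * #|[set z : {ffun I -> bool} | (al + \sum_(k | z k) be k != 0)%R]|)%N.
Proof.
move=> bej; pose flip (z : {ffun I -> bool}) := [ffun k => (k == j) (+) z k].
apply: (@card_le_double_nonzero _ _ flip).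
  by move=> z; apply/ffunP=> k; rewrite !ffunE addbA addbb.
move=> z gz; rewrite {}/flip big_mkcond (bigD1 j) //= ffunE eqxx.
rewrite (eq_bigr (fun k => if z k then be k else 0)); last first.
  by move=> k /negbTE kj; rewrite ffunE kj.
rewrite big_mkcond (bigD1 j) //= in gz.
move: gz; case: (z j) => /=; rewrite add0r => gz.
  by apply: contra bej => /eqP h; rewrite -gz addrCA h addr0.
by rewrite addrCA gz addr0.
Qed.

Section SubsetSums.
Variable p : nat.
Hypothesis p_pr : prime p.

Lemma Fp_shift_closed (A : {set 'F_p}) (b : 'F_p) :
  b != 0 -> A != set0 -> {in A, forall a, a + b \in A} -> A = setT.
Proof.
move=> b0 /set0Pn[a0 a0A] shiftA.
have multiples : forall k : nat, a0 + k%:R * b \in A.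
  elim=> [|k IH]; first by rewrite mul0r addr0.
  by rewrite mulrSr mulrDl mul1r addrA shiftA.
apply/setP=> t; rewrite inE.
have -> : t = a0 + (nat_of_ord ((t - a0) / b))%:R * b.
  by rewrite natr_Zp divfK // addrC subrK.
exact: multiples.
Qed.

Lemma card_setU_shift (A : {set 'F_p}) (b : 'F_p) : b != 0 -> A != set0 ->
  (minn #|A|.+1 p <= #|A :|: [set (a + b)%R | a in A]|)%N.
Proof.
move=> b0 A0; have [->|AT] := eqVneq A setT.
  by rewrite setTU cardsT card_Fp // geq_minr.
have [a aA aN] : exists2 a, a \in A & a + b \notin A.
  apply/exists_inP; apply: contraR AT => /exists_inP noexit; apply/eqP.
  by apply: (Fp_shift_closed b0 A0) => a aA; apply/negPn/negP => aN; apply: noexit; exists a.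
apply: leq_trans (geq_minl _ _) _.
have -> : #|A|.+1 = #|(a + b) |: A| by rewrite cardsU1 aN.
by rewrite subset_leq_card // setUC setUS // sub1set; apply/imsetP; exists a.
Qed.

Variables (I : finType) (be : I -> 'F_p).

Definition subset_sums (J : {set I}) : {set 'F_p} :=
  [set \sum_(i in K) be i | K : {set I} in powerset J].

Lemma subset_sums_neq0 (J : {set I}) : subset_sums J != set0.
Proof.
by apply/set0Pn; exists 0; apply/imsetP; exists set0; rewrite ?powersetE ?sub0set ?big_set0.
Qed.

Lemma subset_sumsD1 (J : {set I}) (j : I) : j \in J ->
  subset_sums (J :\ j) :|: [set (s + be j)%R | s in subset_sums (J :\ j)] \subset subset_sums J.
Proof.
move=> jJ; rewrite subUset; apply/andP; split; apply/subsetP=> x.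
  case/imsetP=> K; rewrite powersetE => KJ ->; apply/imsetP; exists K => //.
  by rewrite powersetE (subset_trans KJ) ?subsetDl.
case/imsetP=> y /imsetP[K]; rewrite powersetE => KJ -> ->; apply/imsetP; exists (j |: K).
  by rewrite powersetE subUset sub1set jJ (subset_trans KJ) ?subsetDl.
have jK : j \notin K by apply/negP => /(subsetP KJ); rewrite !inE eqxx.
by rewrite big_setU1 //= addrC.
Qed.

Lemma card_subset_sums (J : {set I}) : {in J, forall i, be i != 0} ->
  (minn #|J|.+1 p <= #|subset_sums J|)%N.
Proof.
have [m] := ubnP #|J|; elim: m J => // m IH J ltJ nzJ.
have [->|[j jJ]] := set_0Vmem J.
  by rewrite cards0 (leq_trans (geq_minl _ _)) // card_gt0 subset_sums_neq0.
have cardJ : #|J| = #|J :\ j|.+1 by rewrite (cardsD1 j J) jJ.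
have nzJ' : {in J :\ j, forall i, be i != 0} by move=> i /setD1P[_ /nzJ].
have ltJ' : (#|J :\ j| < m)%N by rewrite -ltnS -cardJ.
have := IH _ ltJ' nzJ'.
have := card_setU_shift (nzJ j jJ) (subset_sums_neq0 (J :\ j)).
have := subset_leq_card (subset_sumsD1 jJ).
rewrite cardJ; lia.
Qed.

Lemma subset_sums_setT (J : {set I}) : {in J, forall i, be i != 0} -> (p.-1 <= #|J|)%N ->
  subset_sums J = setT.
Proof.
move=> nzJ cardJ; apply/eqP; rewrite eqEcard subsetT cardsT card_Fp //.
have := card_subset_sums nzJ; have := prime_gt1 p_pr; lia.
Qed.

End SubsetSums.

Section Support.
Variables (F : comNzRingType) (d : nat) (n : 'I_d -> nat) (T : tensor F n).

Definition support : {set multi_index n} := [set s | T s != 0].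

Lemma rank_decomp_support : (0 < d)%N -> rank_decomp T #|support|.
Proof.
move=> d_gt0; pose a1 := Ordinal d_gt0.
(* One rank-one term T s * e_(s 1) (x) ... (x) e_(s d) per nonzero entry s. *)
exists (fun j a t => (if a == a1 then T (enum_val j) else 1) * (t == enum_val j a)%:R) => i.
have point_prod : forall s : multi_index n,
    \prod_a ((if a == a1 then T s else 1) * (i a == s a)%:R) = T s * (i == s)%:R.
  move=> s; rewrite big_split /= (bigD1 a1) //= ?eqxx big1 ?mulr1 => [|a /negbTE -> //].
  have [<-|ne] := eqVneq i s; first by rewrite big1 // => a _; rewrite eqxx.
  have [a ha] : exists a, i a != s a.
    apply/existsP; apply: contraR ne; rewrite negb_exists => /forallP eq_is.
    by apply/eqP/ffunP => a; apply/eqP/negPn.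
  by rewrite (bigD1 a) //= (negbTE ha) mul0r mulr0.
rewrite -(big_enum_val (fun s : multi_index n =>
  \prod_a ((if a == a1 then T s else 1) * (i a == s a)%:R))).
under eq_bigr do rewrite point_prod.
have [Ti0|Ti] := eqVneq (T i) 0.
  by rewrite Ti0 big1 // => s _; have [<-|_] := eqVneq i s; rewrite ?Ti0 ?mulr0 ?mul0r.
rewrite (bigD1 i) ?inE //= eqxx mulr1 big1 ?addr0 // => s /andP[_ si].
by rewrite eq_sym (negbTE si) mulr0.
Qed.

Lemma card_le_prod_proj (D : {set multi_index n}) :
  (#|D| <= \prod_a #|[set s a | s : multi_index n in D]|)%N.
Proof.
have D_family :
    D \subset (family (fun a => [set s a | s : multi_index n in D]) : simpl_pred _).
  by apply/subsetP => s sD; apply/familyP => a; apply: imset_f.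
by rewrite (leq_trans (subset_leq_card D_family)) // card_family foldrE big_image.
Qed.

Lemma exists_large_proj K : (0 < d)%N -> tensor_rank_ge T (K ^ d) ->
  exists a, (K <= #|[set s a | s : multi_index n in support]|)%N.
Proof.
move=> d_gt0 rkT; apply/existsP; apply: contraLR (rkT _ (rank_decomp_support d_gt0)).
rewrite negb_exists => /forallP small.
have {}small a : (#|[set s a | s : multi_index n in support]| < K)%N by rewrite ltnNge small.
have K_gt0 : (0 < K)%N := leq_ltn_trans (leq0n _) (small (Ordinal d_gt0)).
rewrite -ltnNge; apply: leq_ltn_trans (card_le_prod_proj support) _.
apply: (@leq_ltn_trans (\prod_(a < d) K.-1)).
  by apply: leq_prod => a _; rewrite -ltnS prednK.
by rewrite prod_nat_const card_ord ltn_exp2r // prednK.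
Qed.
End Support.

Section Contraction.
Variables (F : comNzRingType) (d : nat) (n : 'I_d -> nat) (T : tensor F n).
Implicit Types (x : forall a, 'I_(n a) -> F) (B : {set 'I_d}) (s : multi_index n).

(* Contraction of T with the vectors x c for c outside B: a tensor in the
   coordinates in B, evaluated at (s c)_(c in B). *)
Definition contract x B s : F :=
  \sum_(r : multi_index n | [forall c in B, r c == s c])
    T r * \prod_(c | c \notin B) x c (r c).

Definition slice_form x (a0 : 'I_d) (i : 'I_(n a0)) : F :=
  \sum_(r : multi_index n | r a0 == i) T r * \prod_(c | c != a0) x c (r c).
Arguments slice_form : clear implicits.

Lemma contract_setT x s : contract x setT s = T s.
Proof.
rewrite /contract (big_pred1 s) => [|r]; last first.
  by apply/forall_inP/eqP => [eq_rs|-> //]; apply/ffunP => c; apply/eqP/eq_rs.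
by rewrite big_pred0 ?mulr1 // => c; rewrite inE.
Qed.

Lemma contract_set1 x a0 s : contract x [set a0] s = slice_form x a0 (s a0).
Proof.
apply: eq_big => [r|r _]; last by under eq_bigl do rewrite inE.
by apply/forall_inP/eqP => [eq_rs|eq_a0 c /set1P ->]; [apply/eqP/eq_rs/set11|rewrite eq_a0].
Qed.

Lemma mlform_slice x a0 : mlform T x = \sum_i x a0 i * slice_form x a0 i.
Proof.
rewrite /mlform (partition_big (fun r : multi_index n => r a0) xpredT) //=.
apply: eq_bigr => i _; rewrite /slice_form big_distrr; apply: eq_bigr => r /eqP ri.
by rewrite (bigD1 a0) //= ri mulrCA.
Qed.

Lemma eq_slice_form x x' a0 : (forall c, c != a0 -> x c =1 x' c) ->
  slice_form x a0 =1 slice_form x' a0.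
Proof.
by move=> eq_x i; apply: eq_bigr => r _; congr (_ * _); apply: eq_bigr => c /eq_x.
Qed.

Lemma contractD1 x B b s : b \in B ->
  contract x (B :\ b) s =
  \sum_(r : multi_index n | [forall c in B :\ b, r c == s c])
    x b (r b) * (T r * \prod_(c | c \notin B) x c (r c)).
Proof.
move=> bB; apply: eq_bigr => r _; rewrite (bigD1 b) ?inE ?eqxx //= mulrCA.
congr (_ * (_ * _)); apply: eq_bigl => c; rewrite !inE.
by have [->|] := eqVneq c b; rewrite ?bB ?andbT.
Qed.

Lemma big_agree_setD1 B b s (w : multi_index n -> F) : b \in B ->
  \sum_(r : multi_index n | [forall c in B :\ b, r c == s c] && (r b == s b)) w r =
  \sum_(r : multi_index n | [forall c in B, r c == s c]) w r.
Proof.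
move=> bB; apply: eq_bigl => r; apply/andP/forall_inP => [[/forall_inP eq_rs eq_b] c cB|eq_rs].
  by have [->|cb] := eqVneq c b; last by apply: eq_rs; rewrite !inE cb.
by split; [apply/forall_inP => c /setD1P[_ /eq_rs]|apply: eq_rs].
Qed.

End Contraction.
Arguments slice_form {F d n} T x a0 i.

Section BooleanPoints.
Variables (F : idomainType) (d : nat) (n : 'I_d -> nat) (T : tensor F n) (u v : 'I_d -> F).
Hypothesis u_neq_v : forall a, u a != v a.
Variable a0 : 'I_d.

(* A switch chooses, for every entry t of every vector x a, one of the two
   values u a and v a; indexing by the sigma type makes switches a finType. *)
Local Notation switch := {ffun {a : 'I_d & 'I_(n a)} -> bool}.

Definition bool_point (y : switch) : forall a, 'I_(n a) -> F :=
  fun a t => if y (Tagged (fun a => 'I_(n a)) t) then v a else u a.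
Arguments bool_point : clear implicits.

Definition override (y : switch) (b : 'I_d) (z : switch) : switch :=
  [ffun k => if tag k == b then z k else y k].

Lemma bool_point_override y b z c t :
  bool_point (override y b z) c t = if c == b then bool_point z c t else bool_point y c t.
Proof. by rewrite /bool_point ffunE /=; case: (c == b). Qed.

Definition active (x : forall a, 'I_(n a) -> F) (B : {set 'I_d}) : {set 'I_(n a0)} :=
  [set s a0 | s : multi_index n in [set s | contract T x B s != 0]].

Lemma contract_override_affine y (B : {set 'I_d}) b s : b \in B ->
  exists (al : F) (be : {a : 'I_d & 'I_(n a)} -> F),
    (forall z, contract T (bool_point (override y b z)) (B :\ b) s = al + \sum_(k | z k) be k)
    /\ be (Tagged _ (s b)) = (v b - u b) * contract T (bool_point y) B s.
Proof.
move=> bB; pose w (r : multi_index n) := T r * \prod_(c | c \notin B) bool_point y c (r c).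
pose agree (r : multi_index n) := [forall c in B :\ b, r c == s c].
exists (\sum_(r | agree r) u b * w r).
exists (fun k => \sum_(r | agree r && (Tagged _ (r b) == k)) (v b - u b) * w r); split.
  move=> z; have off_b (r : multi_index n) :
      \prod_(c | c \notin B) bool_point (override y b z) c (r c) =
      \prod_(c | c \notin B) bool_point y c (r c).
    apply: eq_bigr => c cB; rewrite bool_point_override ifN //.
    by apply: contraNneq cB => ->.
  have split_r (r : multi_index n) : bool_point z b (r b) * w r =
      u b * w r + (if z (Tagged _ (r b)) then (v b - u b) * w r else 0).
    by rewrite /bool_point; case: (z _); rewrite ?addr0 // mulrBl addrC subrK.
  rewrite contractD1 //; under eq_bigr do rewrite off_b bool_point_override eqxx split_r.
  rewrite big_split /=; congr (_ + _).
  rewrite (partition_big (fun r : multi_index n => Tagged _ (r b)) xpredT) //=.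
  rewrite [RHS]big_mkcond /=; apply: eq_bigr => k _.
  rewrite (eq_bigr (fun r => if z k then (v b - u b) * w r else 0)).
    by case: (z k); rewrite ?big1_eq.
  by move=> r /andP[_ /eqP ->].
rewrite /=; under eq_bigl do rewrite eq_Tagged /=.
by rewrite /agree big_agree_setD1 // /contract big_distrr.
Qed.

Lemma card_active_override y (B : {set 'I_d}) b : b \in B -> exists z,
  (#|active (bool_point y) B| <= 2 * #|active (bool_point (override y b z)) (B :\ b)|)%N.
Proof.
move=> bB; apply: exists_large_member; first by apply/card_gt0P; exists [ffun=> false].
move=> i /imsetP[s]; rewrite inE => nz_s ->.
have [al [be [expand be_s]]] := contract_override_affine y s bB.
have be_s_neq0 : be (Tagged _ (s b)) != 0 by rewrite be_s mulf_neq0 // subr_eq0 eq_sym.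
apply: leq_trans (card_le_double_affine_nonzero al be_s_neq0) _.
rewrite leq_mul2l subset_leq_card ?orbT //; apply/subsetP => z; rewrite !inE -expand => nz.
by apply/imsetP; exists s; rewrite ?inE.
Qed.

Lemma card_active_set1 m (B : {set 'I_d}) y : #|B| = m.+1 -> a0 \in B ->
  exists y', (#|active (bool_point y) B| <= 2 ^ m * #|active (bool_point y') [set a0]|)%N.
Proof.
elim: m B y => [|m IH] B y cardB a0B.
  exists y; rewrite mul1n; suff -> : B = [set a0] by [].
  by move/eqP/cards1P: cardB a0B => [c ->] /set1P ->.
have [b /setD1P[ba0 bB]] : exists b, b \in B :\ a0.
  by apply/set0Pn; rewrite -card_gt0; move: (cardsD1 a0 B); rewrite a0B cardB add1n => -[<-].
have [z le_z] := card_active_override y bB.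
have cardBb : #|B :\ b| = m.+1 by move: (cardsD1 b B); rewrite bB cardB add1n => -[].
have a0Bb : a0 \in B :\ b by rewrite !inE eq_sym ba0.
have [y' le_y'] := IH _ (override y b z) cardBb a0Bb.
by exists y'; rewrite expnS -mulnA (leq_trans le_z) // leq_mul2l le_y' orbT.
Qed.

Lemma exists_bool_point_many_slices :
  exists y, (#|[set s a0 | s : multi_index n in support T]| <=
             2 ^ d.-1 * #|[set i | slice_form T (bool_point y) a0 i != 0%R]|)%N.
Proof.
have cardT : #|[set: 'I_d]| = d.-1.+1.
  by rewrite cardsT card_ord prednK // (leq_ltn_trans _ (ltn_ord a0)).
have [y le_y] := card_active_set1 [ffun=> false] cardT (in_setT a0).
have active_setT :
    active (bool_point [ffun=> false]) setT = [set s a0 | s : multi_index n in support T].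
  rewrite /active (_ : [set s | _] = support T) //.
  by apply/setP => s; rewrite !inE contract_setT.
exists y; rewrite -active_setT (leq_trans le_y) // leq_mul2l subset_leq_card ?orbT //.
by apply/subsetP => i /imsetP[s]; rewrite !inE contract_set1 => nz ->.
Qed.

End BooleanPoints.
Arguments bool_point {F d n} u v y a t.

Lemma mlform_bool_point_onto p d (n : 'I_d -> nat) (T : tensor 'F_p n)
    (u v : 'I_d -> 'F_p) a0 y :
  prime p -> u a0 != v a0 ->
  (p.-1 <= #|[set i | slice_form T (bool_point u v y) a0 i != 0%R]|)%N ->
  forall t, exists y', mlform T (bool_point u v y') = t.
Proof.
move=> p_pr uv0 many_slices t; set J := [set i | _] in many_slices.
pose be := slice_form T (bool_point u v y) a0; pose dv := v a0 - u a0.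
have dv0 : dv != 0 by rewrite subr_eq0 eq_sym.
have : (t - u a0 * \sum_i be i) / dv \in subset_sums be J.
  by rewrite subset_sums_setT ?inE // => i; rewrite inE.
case/imsetP => K _ sumK.
have Tagged_inj : injective (@Tagged _ a0 (fun a => 'I_(n a))).
  by move=> i j /eqP; rewrite eq_Tagged => /eqP.
pose z : {ffun {a : 'I_d & 'I_(n a)} -> bool} :=
  [ffun k => k \in [set Tagged (fun a => 'I_(n a)) i | i in K]].
exists (override y a0 z); rewrite (mlform_slice _ _ a0).
have coord i : bool_point u v (override y a0 z) a0 i = if i \in K then v a0 else u a0.
  by rewrite bool_point_override eqxx /bool_point ffunE mem_imset.
have slices : slice_form T (bool_point u v (override y a0 z)) a0 =1 be.
  by apply: eq_slice_form => c ca0 i; rewrite bool_point_override (negbTE ca0).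
under eq_bigr do rewrite coord slices.
have -> : \sum_i (if i \in K then v a0 else u a0) * be i =
          u a0 * \sum_i be i + dv * \sum_(i in K) be i.
  rewrite !big_distrr /= [X in _ + X]big_mkcond -big_split /=; apply: eq_bigr => i _.
  by case: (i \in K); rewrite /dv ?mulr0 ?addr0 //; ring.
by rewrite -sumK [dv * _]mulrC divfK // addrC subrK.
Qed.

Lemma exists_two_points (I T : finType) (S : I -> {set T}) : (forall a, 1 < #|S a|)%N ->
  exists u v : I -> T,
    [/\ forall a, u a \in S a, forall a, v a \in S a & forall a, u a != v a].
Proof.
move=> S2; have /fin_all_exists[q qS] :
    forall a, exists q : T * T, [&& q.1 \in S a, q.2 \in S a & q.1 != q.2].
  by move=> a; have /card_gt1P[x [y [xS yS xy]]] := S2 a; exists (x, y); rewrite /= xS yS.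
by exists (fun a => (q a).1), (fun a => (q a).2); split=> a; case/and3P: (qS a).
Qed.

Theorem proposition6p3 (p d : nat) :
  prime p -> (3 <= p)%N -> (2 <= d)%N ->
  exists Theta : nat,
    forall (n : 'I_d -> nat) (T : tensor 'F_p n) (S : 'I_d -> {set 'F_p}),
      tensor_rank_ge T Theta ->
      (forall a, 2 <= #|S a|)%N ->
      forall z : 'F_p,
        exists x : forall a : 'I_d, 'I_(n a) -> 'F_p,
          (forall (a : 'I_d) (j : 'I_(n a)), x a j \in S a) /\
          mlform T x = z.
Proof.
move=> p_pr _ d_ge2; have d_gt0 : (0 < d)%N by apply: ltnW.
exists ((p.-1 * 2 ^ d.-1) ^ d)%N => n T S rkT S2 t.
have [u [v [uS vS uv]]] := exists_two_points S2.
have [a0 large_proj] := exists_large_proj d_gt0 rkT.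
have [y le_y] := exists_bool_point_many_slices T uv a0.
have many_slices : (p.-1 <= #|[set i | slice_form T (bool_point u v y) a0 i != 0%R]|)%N.
  rewrite -(@leq_pmul2r (2 ^ d.-1)) ?expn_gt0 // [X in (_ <= X)%N]mulnC.
  exact: leq_trans large_proj le_y.
have [y' <-] := mlform_bool_point_onto p_pr (uv a0) many_slices t.
by exists (bool_point u v y'); split=> // a j; rewrite /bool_point; case: ifP.
Qed.
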